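(* Let $t,\ell,m$ be integers with $1 \le t < \ell \le m$. Then $\hat{w}_1(t;\ell,m)<\hat{w}_r(t;\ell,m)$ for every $2\le r\le \ell$. Moreover, the code $\widehat{C}_{\det}(t;\ell,m)$ has exactly $\mu_1(\ell,m)$ codewords of minimum weight, these codewords generate the code, and every codeword of $\widehat{C}_{\det}(t;\ell,m)$ is a sum of at most $\ell$ codewords of minimum weight.
   Context: $q$ is a prime power; $\mu_t(a,b)$ is the number of $a\times b$ matrices over $\mathbb{F}_q$ of rank exactly $t$. For an $\ell\times m$ matrix $M=(m_{ij})$, $\tau_r(M)=m_{11}+\cdots+m_{rr}$. $\hat{w}_r(t;\ell,m)$ is $\frac{1}{q-1}$ times the number of $\ell\times m$ matrices $M$ over $\mathbb{F}_q$ with $1\le\mathrm{rk}(M)\le t$ and $\tau_r(M)\ne 0$. Let $\widehat{\mathcal D}_t(\ell,m)\subset\mathbb{P}^{\ell m-1}(\mathbb{F}_q)=\mathbb{P}(\mathrm{Mat}_{\ell\times m}(\mathbb{F}_q))$ be the set of points $[M]$ with $M\ne 0$ and $\mathrm{rk}(M)\le t$; let $\hat n=|\widehat{\mathcal D}_t(\ell,m)|$, enumerate its points and choose representatives $M_1,\dots,M_{\hat n}$. The determinantal code $\widehat{C}_{\det}(t;\ell,m)\subseteq\mathbb{F}_q^{\hat n}$ is the set of vectors $(f(M_1),\dots,f(M_{\hat n}))$ for $f=\sum_{i,j}f_{ij}X_{ij}$ ranging over linear forms in the entries of an $\ell\times m$ matrix of indeterminates. *)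

From HB Require Import structures.
From mathcomp Require Import all_boot all_order all_algebra all_fingroup.
Set Implicit Arguments. Unset Strict Implicit. Unset Printing Implicit Defensive.
Import GRing.Theory.
Local Open Scope ring_scope.

Section Det.
Variable F : finFieldType.

Definition mu (t a b : nat) : nat :=
  #|[set M : 'M[F]_(a, b) | \rank M == t]|.

Definition tau (l m r : nat) (M : 'M[F]_(l, m)) : F :=
  \sum_(i < l | (i < r)%N) \sum_(j < m | (j == i :> nat)) M i j.

Definition what (t l m r : nat) : nat :=
  divn #|[set M : 'M[F]_(l, m) | (1 <= \rank M <= t)%N && (tau r M != 0)]|
       (#|F|.-1).

(* Canonical representative of a projective point: nonzero matrix whose first
   nonzero entry (in the row-major order of mxvec) equals 1. *)
Definition normalized (l m : nat) (M : 'M[F]_(l, m)) : bool :=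
  [exists k : 'I_(l * m),
     (mxvec M 0 k == 1) &&
     [forall k' : 'I_(l * m), (k' < k)%N ==> (mxvec M 0 k' == 0)]].

(* the points of hat D_t(l,m), given by their chosen representatives *)
Definition Dpts (t l m : nat) : {set 'M[F]_(l, m)} :=
  [set M | normalized M && (\rank M <= t)%N].

Definition evalf (l m : nat) (f M : 'M[F]_(l, m)) : F :=
  \sum_(i < l) \sum_(j < m) f i j * M i j.

Definition codeword (t l m : nat) (f : 'M[F]_(l, m)) : 'rV[F]_#|Dpts t l m| :=
  \row_(k < #|Dpts t l m|) evalf f (enum_val k).

Definition Cdet (t l m : nat) : {set 'rV[F]_#|Dpts t l m|} :=
  [set codeword t f | f : 'M[F]_(l, m)].

End Det.

Definition wt (F : fieldType) (n : nat) (c : 'rV[F]_n) : nat :=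
  #|[set k : 'I_n | c 0 k != 0]|.

Definition is_min_weight (F : finFieldType) (n : nat) (C : {set 'rV[F]_n}) (d : nat) : Prop :=
  (exists2 c, c \in C & (c != 0) && (wt c == d)) /\
  (forall c, c \in C -> c != 0 -> (d <= wt c)%N).

Definition min_words (F : finFieldType) (n : nat) (C : {set 'rV[F]_n}) (d : nat) : {set 'rV[F]_n} :=
  [set c in C | (c != 0) && (wt c == d)].

From HB Require Import structures.
From mathcomp Require Import all_boot all_order all_algebra all_fingroup.
From mathcomp Require Import ring lra zify.
Set Implicit Arguments. Unset Strict Implicit. Unset Printing Implicit Defensive.
Import Order.TTheory GRing.Theory Num.Theory.
Local Open Scope ring_scope.

(* The weight of the codeword of a form f is N_t(f) = #{M : rk M <= t, f(M) = 1}: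
   every nonzero value is taken equally often and each projective point has q - 1
   representatives.  N_t(f) only depends on rk f, and since N_t(f, 0) + (q - 1) N_t(f, 1)
   is the number of matrices of rank <= t, comparing weights amounts to comparing the
   biases H_t(l, m, r) = N_t(pid r, 0) - N_t(pid r, 1).  Splitting off the first row gives
   H_t(l+1, m+1, r) = H_t(l, m+1, r-1) - q^l H_{t-1}(l, m, r-1), and an induction on l
   shows |H_t(l, m, r)| <= H_t(l, m, 1), strictly for r >= 2 when t < l.  Hence the
   minimum weight words are the codewords of the rank-one forms; they span the code,
   and splitting a form into its l rows writes any codeword as a sum of at most l of them. *)

Lemma card_set_sum (T : finType) (P : pred T) :
  #|[set x | P x]| = (\sum_x (P x : nat))%N.
Proof. by rewrite -sum1_card big_mkcond /=; apply: eq_bigr => x _; rewrite inE; case: (P x). Qed.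

Lemma ltn_sum_witness (I : finType) (E1 E2 : I -> nat) (j : I) :
  (forall i, E1 i <= E2 i)%N -> (E1 j < E2 j)%N -> (\sum_i E1 i < \sum_i E2 i)%N.
Proof.
move=> le lt; rewrite (bigD1 j) //= [X in (_ < X)%N](bigD1 j) //=.
have := @leq_sum _ (index_enum I) (fun i => i != j) E1 E2 (fun i _ => le i); lia.
Qed.

Lemma sum_over_col_mx (T : finType) l1 l2 m (f : 'M[T]_(l1 + l2, m) -> nat) :
  (\sum_M f M = \sum_u \sum_N f (col_mx u N))%N.
Proof.
rewrite pair_bigA /= (reindex (fun p : 'M[T]_(l1, m) * 'M[T]_(l2, m) => col_mx p.1 p.2)) //=.
exists (fun M => (usubmx M, dsubmx M)) => [[u N]|M] _ /=; last by rewrite vsubmxK.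
by rewrite col_mxKu col_mxKd.
Qed.

Lemma sum_over_row_mx (T : finType) l m1 m2 (f : 'M[T]_(l, m1 + m2) -> nat) :
  (\sum_M f M = \sum_u \sum_N f (row_mx u N))%N.
Proof.
rewrite pair_bigA /= (reindex (fun p : 'M[T]_(l, m1) * 'M[T]_(l, m2) => row_mx p.1 p.2)) //=.
exists (fun M => (lsubmx M, rsubmx M)) => [[u N]|M] _ /=; last by rewrite hsubmxK.
by rewrite row_mxKl row_mxKr.
Qed.

Lemma mxrank_mulmx_unitr (F : fieldType) m n (M : 'M[F]_(m, n)) (Q : 'M[F]_n) :
  Q \in unitmx -> \rank (M *m Q) = \rank M.
Proof. by move=> U; rewrite mxrankMfree // row_free_unit. Qed.

Lemma mxrank_mulmx_unitl (F : fieldType) m n (P : 'M[F]_m) (M : 'M[F]_(m, n)) :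
  P \in unitmx -> \rank (P *m M) = \rank M.
Proof.
by move=> U; rewrite -mxrank_tr trmx_mul mxrank_mulmx_unitr ?mxrank_tr ?unitmx_tr.
Qed.

Lemma mxrank_row_mx_leq (F : fieldType) n p1 p2 (c : 'M[F]_(n, p1)) (Y : 'M[F]_(n, p2)) :
  (\rank (row_mx c Y) <= \rank c + \rank Y)%N.
Proof.
rewrite -mxrank_tr tr_row_mx -addsmxE -(mxrank_tr c) -(mxrank_tr Y).
exact: (mxrank_adds_leqif c^T Y^T).1.
Qed.

Lemma lower_unitriangular_unit (F : fieldType) m n (w : 'M[F]_(n, m)) :
  block_mx 1%:M 0 w 1%:M \in unitmx.
Proof. by rewrite unitmxE det_lblock !det1 mulr1 unitr1. Qed.

Section Pairing.
Variable F : finFieldType.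

Lemma evalf_trace l m (A M : 'M[F]_(l, m)) : evalf A M = \tr (A^T *m M).
Proof.
rewrite /evalf /mxtrace exchange_big; apply: eq_bigr => j _; rewrite mxE.
by apply: eq_bigr => i _; rewrite mxE.
Qed.

Lemma evalf_mulmxr l m n (A : 'M[F]_(l, n)) (M : 'M[F]_(l, m)) (Q : 'M[F]_(m, n)) :
  evalf A (M *m Q) = evalf (A *m Q^T) M.
Proof. by rewrite !evalf_trace mulmxA mxtrace_mulC mulmxA trmx_mul trmxK. Qed.

Lemma evalf_mulmxl l m n (A : 'M[F]_(l, n)) (P : 'M[F]_(l, m)) (M : 'M[F]_(m, n)) :
  evalf A (P *m M) = evalf (P^T *m A) M.
Proof. by rewrite !evalf_trace trmx_mul trmxK mulmxA. Qed.

Lemma evalfD l m (A M N : 'M[F]_(l, m)) : evalf A (M + N) = evalf A M + evalf A N.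
Proof. by rewrite !evalf_trace mulmxDr linearD. Qed.

Lemma evalfZ l m (A M : 'M[F]_(l, m)) (k : F) : evalf A (k *: M) = k * evalf A M.
Proof. by rewrite !evalf_trace -scalemxAr linearZ. Qed.

Lemma evalf0 l m (A : 'M[F]_(l, m)) : evalf A 0 = 0.
Proof. by rewrite evalf_trace mulmx0 linear0. Qed.

Lemma evalfDl l m (A B M : 'M[F]_(l, m)) : evalf (A + B) M = evalf A M + evalf B M.
Proof. by rewrite !evalf_trace linearD mulmxDl linearD. Qed.

Lemma evalfZl l m (A M : 'M[F]_(l, m)) (k : F) : evalf (k *: A) M = k * evalf A M.
Proof. by rewrite !evalf_trace linearZ -scalemxAl linearZ. Qed.

Lemma evalf0l l m (M : 'M[F]_(l, m)) : evalf 0 M = 0.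
Proof. by rewrite evalf_trace linear0 mul0mx linear0. Qed.

Lemma evalf_tr l m (A M : 'M[F]_(l, m)) : evalf A^T M^T = evalf A M.
Proof. by rewrite !evalf_trace trmxK -mxtrace_tr trmx_mul trmxK mxtrace_mulC. Qed.

Lemma evalf_col_mx l1 l2 m (A : 'M[F]_(l1 + l2, m)) u N :
  evalf A (col_mx u N) = evalf (usubmx A) u + evalf (dsubmx A) N.
Proof. by rewrite !evalf_trace -{1}(vsubmxK A) tr_col_mx mul_row_col linearD. Qed.

Lemma evalf_row_mx l m1 m2 (A : 'M[F]_(l, m1 + m2)) c Y :
  evalf A (row_mx c Y) = evalf (lsubmx A) c + evalf (rsubmx A) Y.
Proof.
rewrite -[LHS]evalf_tr tr_row_mx evalf_col_mx -trmx_lsub -trmx_rsub.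
by rewrite !evalf_tr.
Qed.

Lemma evalf_delta l m (A : 'M[F]_(l, m)) i j : evalf A (delta_mx i j) = A i j.
Proof.
rewrite /evalf (bigD1 i) //= (bigD1 j) //= mxE !eqxx mulr1.
rewrite big1 ?addr0 => [|j' nj]; last by rewrite mxE (negbTE nj) andbF mulr0.
rewrite big1 ?addr0 // => i' ni; rewrite big1 // => j' _.
by rewrite mxE (negbTE ni) mulr0.
Qed.

Lemma tau_pid_mx l m r (M : 'M[F]_(l, m)) : tau r M = evalf (pid_mx r) M.
Proof.
rewrite /tau /evalf big_mkcond /=; apply: eq_bigr => i _.
rewrite big_mkcond /=; case: ifP => ir; last first.
  by rewrite big1 // => j _; rewrite mxE ir andbF mul0r.
apply: eq_bigr => j _; rewrite mxE eq_sym; case: eqP => [ji|_]; last by rewrite mul0r.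
by rewrite ir mul1r.
Qed.

End Pairing.

Section Fibers.
Variables (F : finFieldType) (t : nat).

Definition card_rank_le l m : nat := #|[set M : 'M[F]_(l, m) | (\rank M <= t)%N]|.

Definition fiber_card l m (A : 'M[F]_(l, m)) (c : F) : nat :=
  #|[set M : 'M[F]_(l, m) | (\rank M <= t)%N && (evalf A M == c)]|.

Definition fiber_bias l m (A : 'M[F]_(l, m)) : int :=
  (fiber_card A 0)%:R - (fiber_card A 1)%:R.

Lemma card_rank_leE l m :
  card_rank_le l m = (\sum_(M : 'M[F]_(l, m)) ((\rank M <= t)%N : nat))%N.
Proof. exact: card_set_sum. Qed.

Lemma fiber_cardE l m (A : 'M[F]_(l, m)) c :
  fiber_card A c = (\sum_M ((\rank M <= t)%N && (evalf A M == c) : nat))%N.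
Proof. exact: card_set_sum. Qed.

Lemma fiber_card_mulmx_unit l m (A : 'M[F]_(l, m)) P Q c :
  P \in unitmx -> Q \in unitmx -> fiber_card (P^T *m A *m Q^T) c = fiber_card A c.
Proof.
move=> UP UQ.
have inj : injective (fun M : 'M[F]_(l, m) => P *m M *m Q).
  by move=> M1 M2 /= /(can_inj (mulmxK UQ)) /(can_inj (mulKmx UP)).
rewrite /fiber_card -[RHS](card_preimset _ inj); apply: eq_card => M; rewrite !inE.
by rewrite mxrank_mulmx_unitr // mxrank_mulmx_unitl // evalf_mulmxr evalf_mulmxl mulmxA.
Qed.

Lemma fiber_card_rank l m (A : 'M[F]_(l, m)) c :
  fiber_card A c = fiber_card (pid_mx (\rank A) : 'M[F]_(l, m)) c.
Proof.
rewrite -{1}(mulmx_ebase A) -[col_ebase A]trmxK -[row_ebase A]trmxK.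
by rewrite fiber_card_mulmx_unit // unitmx_tr ?col_ebase_unit ?row_ebase_unit.
Qed.

Lemma fiber_cardZ l m (A : 'M[F]_(l, m)) (k c : F) :
  k != 0 -> fiber_card A (k * c) = fiber_card A c.
Proof.
move=> nz; have inj : injective (fun M : 'M[F]_(l, m) => k *: M) := scalerI nz.
rewrite /fiber_card -(card_preimset _ inj); apply: eq_card => M; rewrite !inE.
by rewrite mxrank_scale_nz // evalfZ (inj_eq (mulfI nz)).
Qed.

Lemma card_rank_le_fibers l m (A : 'M[F]_(l, m)) :
  card_rank_le l m = (fiber_card A 0%R + #|F|.-1 * fiber_card A 1%R)%N.
Proof.
have -> : card_rank_le l m = (\sum_c fiber_card A c)%N.
  under eq_bigr => c _ do rewrite fiber_cardE.
  rewrite card_rank_leE exchange_big; apply: eq_bigr => M _.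
  rewrite (bigD1 (evalf A M)) //= eqxx andbT big1 ?addn0 // => c /negbTE nc.
  by rewrite eq_sym nc andbF.
rewrite (bigD1 0) //= (eq_bigr (fun => fiber_card A 1)); last first.
  by move=> c nz; rewrite -(fiber_cardZ _ 1 nz) mulr1.
by rewrite sum_nat_const -(cardC1 (0 : F)) mulnC.
Qed.

Lemma card_rank_le_bias l m (A : 'M[F]_(l, m)) :
  (card_rank_le l m)%:R = fiber_bias A + #|F|%:R * (fiber_card A 1)%:R.
Proof.
rewrite (card_rank_le_fibers A) /fiber_bias natrD natrM.
rewrite -[#|F| in RHS](prednK (ltnW (card_finNzRing_gt1 F))) -addn1 natrD; ring.
Qed.

Lemma fiber_card0_1 l m : fiber_card (0 : 'M[F]_(l, m)) 1 = 0%N.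
Proof. by rewrite fiber_cardE big1 // => M _; rewrite evalf0l eq_sym oner_eq0 andbF. Qed.

Lemma card_rank_le_fiber0 l m : card_rank_le l m = fiber_card (0 : 'M[F]_(l, m)) 0.
Proof. by rewrite (card_rank_le_fibers 0) fiber_card0_1 muln0 addn0. Qed.

Lemma card_nonzero_values l m (A : 'M[F]_(l, m)) :
  #|[set M : 'M[F]_(l, m) | (1 <= \rank M <= t)%N && (evalf A M != 0)]|
  = (#|F|.-1 * fiber_card A 1%R)%N.
Proof.
apply/eqP; rewrite -(eqn_add2l (fiber_card A 0%R)) -card_rank_le_fibers.
rewrite card_rank_leE fiber_cardE !card_set_sum -big_split /=; apply/eqP/eq_bigr => M _.
case: eqP => [A0|nz]; rewrite ?andbT ?andbF ?addn0 //=.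
rewrite lt0n mxrank_eq0; case: eqP => [M0|] //=.
by case: nz; rewrite M0 evalf0.
Qed.

End Fibers.

Lemma fiber_card_rank0 (F : finFieldType) l m (A : 'M[F]_(l, m)) c :
  fiber_card 0 A c = (c == 0 : nat).
Proof.
rewrite fiber_cardE (bigD1 0) //= mxrank0 evalf0 eq_sym /= big1 ?addn0 // => M nz.
by rewrite leqn0 mxrank_eq0 (negbTE nz).
Qed.

Definition pid_bias (F : finFieldType) t l m r : int :=
  fiber_bias t (pid_mx r : 'M[F]_(l, m)).

Lemma fiber_bias_rank (F : finFieldType) t l m (A : 'M[F]_(l, m)) :
  fiber_bias t A = pid_bias F t l m (\rank A).
Proof. by rewrite /pid_bias /fiber_bias -!fiber_card_rank. Qed.

Section FirstRow.
Variable F : finFieldType.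

Lemma dsubmx0 m1 m2 n : dsubmx (0 : 'M[F]_(m1 + m2, n)) = 0.
Proof. by rewrite -[0]col_mx0 col_mxKd. Qed.

Lemma usubmx0 m1 m2 n : usubmx (0 : 'M[F]_(m1 + m2, n)) = 0.
Proof. by rewrite -[0]col_mx0 col_mxKu. Qed.

Definition row_fiber t l m (A : 'M[F]_(1 + l, m)) (u : 'rV[F]_m) (c : F) : nat :=
  (\sum_(N : 'M[F]_(l, m))
     ((\rank (col_mx u N) <= t)%N && (evalf A (col_mx u N) == c) : nat))%N.

Lemma fiber_card_row_fibers t l m (A : 'M[F]_(1 + l, m)) c :
  fiber_card t A c = (\sum_u row_fiber t A u c)%N.
Proof. by rewrite fiber_cardE sum_over_col_mx. Qed.

Lemma row_fiber0 t l m (A : 'M[F]_(1 + l, m)) c :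
  row_fiber t A 0 c = fiber_card t (dsubmx A) c.
Proof.
rewrite fiber_cardE; apply: eq_bigr => N _.
by rewrite rank_col_0mx evalf_col_mx evalf0 add0r.
Qed.

(* Adding to N a suitable multiple [w *m u] of the first row is a rank-preserving
   translation that shifts the value of the pairing by 1. *)
Lemma row_fiber_unbiased t l m (A : 'M[F]_(1 + l, m)) u :
  dsubmx A *m u^T != 0 -> row_fiber t A u 0 = row_fiber t A u 1.
Proof.
set B := dsubmx A => /matrix0Pn[i [j vij]].
set w : 'cV[F]_l := - ((B *m u^T) i j)^-1 *: delta_mx i j.
have Ew : evalf B (w *m u) = -1.
  by rewrite evalf_mulmxr evalfZ evalf_delta mulNr mulVf.
rewrite /row_fiber (reindex_inj (addIr (w *m u))) /=; apply: eq_bigr => N _.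
have -> : col_mx u (N + w *m u) = block_mx 1%:M 0 w 1%:M *m col_mx u N.
  by rewrite mul_block_col !mul1mx mul0mx addr0 addrC.
rewrite mxrank_mulmx_unitl ?lower_unitriangular_unit //; congr (_ && _).
rewrite mul_block_col !mul1mx mul0mx addr0 !evalf_col_mx evalfD Ew -/B.
by rewrite addrA addrAC subr_eq0.
Qed.

Lemma row_unit_basis m (u : 'rV[F]_(1 + m)) :
  u != 0 -> exists2 Q, Q \in unitmx & u = pid_mx 1 *m Q.
Proof.
move=> nz; have ru : \rank u = 1%N.
  by apply/eqP; rewrite eqn_leq rank_leq_row lt0n mxrank_eq0 nz.
have UC : col_ebase u 0 0 \is a GRing.unit.
  by rewrite -det_mx11 -unitmxE col_ebase_unit.
exists (col_ebase u 0 0 *: row_ebase u); first by rewrite unitmxZ // row_ebase_unit.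
rewrite -{1}(mulmx_ebase u) ru (mx11_scalar (col_ebase u)) mul_scalar_mx.
by rewrite -scalemxAl scalemxAr mxE eqxx mulr1n.
Qed.

Lemma mxrank_pid1_col_mx l m (c : 'cV[F]_l) (Y : 'M[F]_(l, m)) :
  \rank (col_mx (pid_mx 1 : 'rV[F]_(1 + m)) (row_mx c Y)) = (\rank Y).+1.
Proof.
rewrite pid_mx_row -[col_mx _ _]/(block_mx _ _ _ _).
have -> : block_mx 1%:M 0 c Y = block_mx 1%:M 0 c 1%:M *m block_mx 1%:M 0 0 Y.
  by rewrite mulmx_block !mulmx0 !mulmx1 !mul0mx !mul1mx !addr0 !add0r.
by rewrite mxrank_mulmx_unitl ?lower_unitriangular_unit // rank_diag_block_mx mxrank1.
Qed.

(* After a change of basis u becomes the first unit row, and the remaining rows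
   split as [c | Y] with [c] free and [Y] of rank at most t - 1. *)
Lemma row_fiber_reduce t l m (A : 'M[F]_(1 + l, 1 + m)) (u : 'rV[F]_(1 + m)) c :
  (0 < t)%N -> u != 0 -> dsubmx A *m u^T = 0 ->
  row_fiber t A u c = (#|F| ^ l * fiber_card t.-1 (pid_mx (\rank (dsubmx A)) : 'M[F]_(l, m))
                                                (c - evalf (usubmx A) u)%R)%N.
Proof.
move=> t0 nz Bu; have [Q UQ uQ] := row_unit_basis nz.
rewrite /row_fiber (reindex_inj (can_inj (mulmxK UQ))) /=.
set D := dsubmx A *m Q^T.
have lD : lsubmx D = 0.
  have -> : lsubmx D = D *m (pid_mx 1 : 'rV[F]_(1 + m))^T.
    by rewrite pid_mx_row -{2}(hsubmxK D) tr_row_mx trmx1 trmx0 mul_row_col mulmx1 mulmx0 addr0.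
  by rewrite /D -mulmxA -trmx_mul -uQ.
have rD : \rank (rsubmx D) = \rank (dsubmx A).
  by rewrite -(mxrank_mulmx_unitr _ (_ : Q^T \in unitmx)) ?unitmx_tr // -/D
             -{2}(hsubmxK D) lD rank_row_0mx.
under eq_bigr => N _ do rewrite uQ -mul_col_mx mxrank_mulmx_unitr // evalf_mulmxr
  evalf_col_mx -mul_usub_mx -mul_dsub_mx -/D -evalf_mulmxr -uQ.
rewrite sum_over_row_mx.
under eq_bigr => c' _ do under eq_bigr => Y _ do
  rewrite mxrank_pid1_col_mx evalf_row_mx lD evalf0l add0r.
rewrite sum_nat_const card_mx muln1 -rD -fiber_card_rank fiber_cardE; congr (_ * _)%N.
apply: eq_bigr => Y _; rewrite -{1}(prednK t0) ltnS; congr (_ && _).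
by rewrite addrC eq_sym -subr_eq eq_sym.
Qed.

Lemma card_rank_le_rec t l m : (0 < t)%N ->
  card_rank_le F t (1 + l) (1 + m) =
  (card_rank_le F t l (1 + m) + (#|F| ^ (1 + m) - 1) * (#|F| ^ l * card_rank_le F t.-1 l m))%N.
Proof.
move=> t0; rewrite card_rank_le_fiber0 fiber_card_row_fibers (bigD1 0) //= row_fiber0.
rewrite dsubmx0 -card_rank_le_fiber0; congr (_ + _)%N.
rewrite (eq_bigr (fun => #|F| ^ l * card_rank_le F t.-1 l m))%N.
  by rewrite sum_nat_const cardC1 card_mx mul1n subn1.
move=> u nz; rewrite row_fiber_reduce // ?dsubmx0 ?mul0mx //.
by rewrite mxrank0 pid_mx_0 usubmx0 evalf0l subrr card_rank_le_fiber0.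
Qed.

Lemma fiber_bias_shift t l m (B : 'M[F]_(l, m)) (x : F) :
  ((fiber_card t B (0 - x))%:R - (fiber_card t B (1 - x))%:R : int)
  = ((x == 0)%:R - (x == 1)%:R) * fiber_bias t B.
Proof.
rewrite /fiber_bias; have [->|x0] := eqVneq x 0.
  by rewrite !subr0 eq_sym oner_eq0 /= subr0 mul1r.
have [->|x1] := eqVneq x 1.
  rewrite subrr sub0r -[- 1]mulr1 fiber_cardZ ?oppr_eq0 ?oner_eq0 //.
  by rewrite sub0r mulN1r opprB.
rewrite -[0 - x]mulr1 -[1 - x]mulr1 !fiber_cardZ ?subrr ?mul0r //.
  by rewrite subr_eq0 eq_sym.
by rewrite sub0r oppr_eq0.
Qed.

Lemma evalf_pid1 m (u : 'rV[F]_(1 + m)) : evalf (pid_mx 1) u = u 0 0.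
Proof.
rewrite /evalf big_ord1 (bigD1 0) //= mxE mul1r big1 ?addr0 // => j nj.
by move: nj; rewrite -val_eqE mxE eq_sym => /negbTE ->; rewrite mul0r.
Qed.

(* Translating by the first unit row exchanges the two terms of each summand. *)
Lemma sum_kernel_signs n m (B : 'M[F]_(n, m)) :
  \sum_(u : 'rV[F]_(1 + m))
     ((row_mx 0 B *m u^T == 0)%:R * ((u 0 0 == 0)%:R - (u 0 0 == 1)%:R) : int) = 0.
Proof.
under eq_bigr => u _ do rewrite mulrBr.
rewrite sumrB; apply/eqP; rewrite subr_eq0; apply/eqP.
rewrite [RHS](reindex_inj (addIr (pid_mx 1))) /=; apply: eq_bigr => u _.
rewrite linearD /= mulmxDr.
have -> : row_mx 0 B *m (pid_mx 1 : 'rV[F]_(1 + m))^T = 0.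
  by rewrite pid_mx_row tr_row_mx mul_row_col mul0mx trmx0 mulmx0 addr0.
by rewrite addr0 !mxE eqxx /= -[X in _ + 1 == X]add0r (inj_eq (addIr 1)).
Qed.

(* Only the first rows u orthogonal to the rows of [row_mx 0 B] contribute, with the
   sign of [u 0 0], and these signs add up to -1 over the nonzero u. *)
Lemma fiber_bias_rec t l m (B : 'M[F]_(l, m)) : (0 < t)%N ->
  fiber_bias t (block_mx 1%:M 0 0 B : 'M[F]_(1 + l, 1 + m))
  = fiber_bias t (row_mx 0 B : 'M[F]_(l, 1 + m)) - (#|F| ^ l)%:R * fiber_bias t.-1 B.
Proof.
move=> t0; set A := block_mx _ _ _ _.
have uA : usubmx A = pid_mx 1 by rewrite /A /block_mx col_mxKu pid_mx_row.
have dA : dsubmx A = row_mx 0 B by rewrite /A /block_mx col_mxKd.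
set g := fun u : 'rV[F]_(1 + m) =>
  ((row_mx 0 B *m u^T == 0)%:R * ((u 0 0 == 0)%:R - (u 0 0 == 1)%:R) : int).
rewrite /fiber_bias !fiber_card_row_fibers !natr_sum -sumrB (bigD1 0) //= !row_fiber0 dA.
congr (_ + _); rewrite (eq_bigr (fun u => (#|F| ^ l)%:R * (g u * fiber_bias t.-1 B))).
  rewrite -mulr_sumr -mulr_suml -mulrN; congr (_ * _).
  have := sum_kernel_signs B; rewrite (bigD1 0) //= -/g => /eqP.
  rewrite addrC addr_eq0 => /eqP ->.
  by rewrite /g trmx0 mulmx0 mxE !eqxx (eq_sym 0) oner_eq0 subr0 mul1r mulN1r.
move=> u nz; rewrite /g -dA; case: (eqVneq (dsubmx A *m u^T) 0) => Du.
  rewrite !row_fiber_reduce // !natrM -mulrBr dA rank_row_0mx -!fiber_card_rank.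
  by rewrite uA fiber_bias_shift evalf_pid1 mul1r.
by rewrite row_fiber_unbiased // subrr mul0r mul0r mulr0.
Qed.

End FirstRow.

Section PidBias.
Variable F : finFieldType.

Lemma pid_bias_rank0 t l m : pid_bias F t l m 0 = (card_rank_le F t l m)%:R.
Proof. by rewrite /pid_bias /fiber_bias pid_mx_0 fiber_card0_1 subr0 card_rank_le_fiber0. Qed.

Lemma pid_bias_t0 l m r : pid_bias F 0 l m r = 1.
Proof. by rewrite /pid_bias /fiber_bias !fiber_card_rank0 eqxx oner_eq0 subr0. Qed.

Lemma card_rank_le_t0 l m : card_rank_le F 0 l m = 1%N.
Proof. by rewrite card_rank_le_fiber0 fiber_card_rank0 eqxx. Qed.

Lemma card_rank_le_l0 t m : card_rank_le F t 0 m = 1%N.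
Proof.
rewrite card_rank_leE (bigD1 0) //= mxrank0 big1 // => M nz.
by case/eqP: nz; apply/matrixP => [[]].
Qed.

Lemma pid_bias_rec t l m r :
  (0 < t)%N -> (0 < r)%N -> (r.-1 <= l)%N -> (r.-1 <= m)%N ->
  pid_bias F t (1 + l) (1 + m) r
  = pid_bias F t l (1 + m) r.-1 - (#|F| ^ l)%:R * pid_bias F t.-1 l m r.-1.
Proof.
move=> t0 r0 rl rm.
have rB : \rank (pid_mx r.-1 : 'M[F]_(l, m)) = r.-1 by rewrite rank_pid_mx.
transitivity (fiber_bias t (block_mx 1%:M 0 0 (pid_mx r.-1) : 'M[F]_(1 + l, 1 + m))).
  by rewrite fiber_bias_rank rank_diag_block_mx mxrank1 rB [(1 + r.-1)%N]add1n prednK.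
by rewrite fiber_bias_rec // !fiber_bias_rank rank_row_0mx rB.
Qed.

Lemma card_rank_le_extend_sum a n p :
  (#|F| ^ n * card_rank_le F a n p
   = \sum_(c : 'cV[F]_n) \sum_(Y : 'M[F]_(n, p)) ((\rank Y <= a)%N : nat))%N.
Proof. by rewrite sum_nat_const card_mx muln1 card_rank_leE. Qed.

Lemma rank_row_mx_col_leq a n p (c : 'cV[F]_n) (Y : 'M[F]_(n, p)) :
  (((\rank Y <= a)%N : nat) <= ((\rank (row_mx c Y) <= a.+1)%N : nat))%N.
Proof.
have := mxrank_row_mx_leq c Y; have := rank_leq_col c.
by case: (leqP (\rank Y) a); case: (leqP (\rank (row_mx c Y)) a.+1) => //=; lia.
Qed.

Lemma card_rank_le_extend a n p :
  (#|F| ^ n * card_rank_le F a n p <= card_rank_le F a.+1 n (1 + p))%N.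
Proof.
rewrite card_rank_le_extend_sum card_rank_leE sum_over_row_mx.
by apply: leq_sum => c _; apply: leq_sum => Y _; apply: rank_row_mx_col_leq.
Qed.

Lemma card_rank_le_extend_lt a n p : (a < n)%N -> (a < p)%N ->
  (#|F| ^ n * card_rank_le F a n p < card_rank_le F a.+1 n (1 + p))%N.
Proof.
move=> an ap; rewrite card_rank_le_extend_sum card_rank_leE sum_over_row_mx !pair_bigA /=.
apply: (@ltn_sum_witness _ _ _ (0, pid_mx a.+1)) => [[c Y]|] /=.
  exact: rank_row_mx_col_leq.
by rewrite rank_row_0mx rank_pid_mx // leqnn ltnn.
Qed.

End PidBias.

(* [S t l m] and [H t l m r] stand for [card_rank_le F t l m] and [pid_bias F t l m r]. *)
Section BiasInequality.
Variables (q : nat) (S : nat -> nat -> nat -> int) (H : nat -> nat -> nat -> nat -> int).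
Hypothesis q_gt1 : (1 < q)%N.
Hypothesis H_r0 : forall t l m, H t l m 0 = S t l m.
Hypothesis H_t0 : forall l m r, H 0 l m r = 1.
Hypothesis S_t0 : forall l m, S 0 l m = 1.
Hypothesis S_l0 : forall t m, S t 0 m = 1.
Hypothesis S_rec : forall t l m,
  S t.+1 l.+1 m.+1 = S t.+1 l m.+1 + ((q ^ m.+1)%:R - 1) * (q ^ l)%:R * S t l m.
Hypothesis H_rec : forall t l m r, (r <= l)%N -> (r <= m)%N ->
  H t.+1 l.+1 m.+1 r.+1 = H t.+1 l m.+1 r - (q ^ l)%:R * H t l m r.
Hypothesis S_extend : forall a n p, (q ^ n)%:R * S a n p <= S a.+1 n p.+1.
Hypothesis S_extend_lt : forall a n p, (a < n)%N -> (a < p)%N ->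
  (q ^ n)%:R * S a n p < S a.+1 n p.+1.

Lemma bias1E t l m : H t.+1 l.+1 m.+1 1 = S t.+1 l m.+1 - (q ^ l)%:R * S t l m.
Proof. by rewrite H_rec // !H_r0. Qed.

Definition bias1_gap t l m : int :=
  H t.+1 l.+2 m.+1 1 - H t.+1 l.+1 m.+1 1 - (q ^ l.+1)%:R * H t l.+1 m 1.

Lemma bias1_gap0 l m : bias1_gap 0 l m.+1 = (q ^ l.+1)%:R * ((q ^ m.+1)%:R - 2).
Proof.
rewrite /bias1_gap H_t0 !bias1E S_rec !S_t0 !expnS !natrM.
set x := (q ^ l)%:R; set y := (q ^ m)%:R; set Q := q%:R; ring.
Qed.

Lemma bias1_gapS t l m : bias1_gap t.+1 l m.+1 =
  (q ^ l.+1)%:R * ((q ^ m.+1)%:R - 2) * (S t.+1 l m.+1 - (q ^ l)%:R * S t l m).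
Proof.
rewrite /bias1_gap !bias1E !S_rec !expnS !natrM.
set x := (q ^ l)%:R; set y := (q ^ m)%:R; set Q := q%:R; ring.
Qed.

Lemma qexp_gt0 n : 0 < (q ^ n)%:R :> int.
Proof. by rewrite ltr0n expn_gt0; lia. Qed.

Lemma qexpS_ge2 n : 2 <= (q ^ n.+1)%:R :> int.
Proof. by rewrite ler_nat (leq_trans q_gt1) // -[leqLHS]expn1 leq_pexp2l //; lia. Qed.

Lemma bias1_gap_ge0 t l m : 0 <= bias1_gap t l m.+1.
Proof.
have x0 := qexp_gt0 l.+1; have y2 := qexpS_ge2 m.
have y20 : 0 <= (q ^ m.+1)%:R - 2 :> int by rewrite subr_ge0.
case: t => [|t]; first by rewrite bias1_gap0; apply: mulr_ge0 => //; exact: ltW.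
rewrite bias1_gapS; apply: mulr_ge0; first by apply: mulr_ge0 => //; exact: ltW.
by rewrite subr_ge0 S_extend.
Qed.

Lemma bias1_gap_gt0 t l m : (t < l)%N -> (l <= m)%N -> 0 < bias1_gap t.+1 l m.+1.
Proof.
move=> tl lm; rewrite bias1_gapS !mulr_gt0 ?qexp_gt0 // subr_gt0; last first.
  by apply: S_extend_lt; lia.
have q2 : (2 < q ^ 2)%N by rewrite expnS expn1; nia.
by rewrite ltr_nat (leq_trans q2) // leq_pexp2l //; lia.
Qed.

Lemma bias_bounded l t m : (1 <= l <= m)%N ->
  0 <= H t l m 1 /\ (forall r, (1 <= r <= l)%N -> `|H t l m r| <= H t l m 1).
Proof.
elim: l t m => [|l IH] t m /andP[l1 lm] //.
case: l IH l1 lm => [|l] IH _ lm.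
  suff bias11_ge0 : 0 <= H t 1 m 1.
    split=> // r /andP[r1 r2]; have -> : r = 1%N by lia.
    by rewrite ger0_norm.
  case: t => [|t]; first by rewrite H_t0.
  by case: m lm => // m _; rewrite (bias1E t 0 m) !S_l0 expn0 mul1r subrr.
case: t => [|t]; first by split=> [|r _]; rewrite !H_t0 ?normr1.
case: m lm => [|[|m]] lm; try lia.
have [G2 B2] := IH t.+1 m.+2 (ltac:(lia)).
have [G3 B3] := IH t m.+1 (ltac:(lia)).
have gap := bias1_gap_ge0 t l m; rewrite /bias1_gap in gap.
have qpos := qexp_gt0 l.+1.
have qG3 : 0 <= (q ^ l.+1)%:R * H t l.+1 m.+1 1 by rewrite mulr_ge0 // ltW.
have G0 : 0 <= H t.+1 l.+2 m.+2 1 by lra.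
split=> // -[|[|r]] // /andP[_ rl]; first by rewrite ger0_norm.
rewrite H_rec //; try lia.
have ha : `|H t.+1 l.+1 m.+2 r.+1| <= H t.+1 l.+1 m.+2 1 by apply: B2; lia.
have hb : `|H t l.+1 m.+1 r.+1| <= H t l.+1 m.+1 1 by apply: B3; lia.
have : (q ^ l.+1)%:R * `|H t l.+1 m.+1 r.+1| <= (q ^ l.+1)%:R * H t l.+1 m.+1 1.
  by rewrite ler_pM2l.
have := ler_normB (H t.+1 l.+1 m.+2 r.+1) ((q ^ l.+1)%:R * H t l.+1 m.+1 r.+1).
rewrite normrM (gtr0_norm qpos); lra.
Qed.

Lemma bias_lt_bias1 t l m r : (1 <= t)%N -> (t < l)%N -> (l <= m)%N -> (2 <= r <= l)%N ->
  H t l m r < H t l m 1.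
Proof.
case: t => // t _; case: l => [|[|l]] //; case: m => [|[|m]] //; case: r => [|[|r]] //.
move=> tl lm /andP[_ rl].
have [_ Ba] := @bias_bounded l.+1 t.+1 m.+2 ltac:(lia).
have [_ Bb] := @bias_bounded l.+1 t m.+1 ltac:(lia).
have ha : H t.+1 l.+1 m.+2 r.+1 <= H t.+1 l.+1 m.+2 1.
  exact: le_trans (ler_norm _) (Ba r.+1 ltac:(lia)).
have hb : - H t l.+1 m.+1 r.+1 <= H t l.+1 m.+1 1.
  by apply: le_trans (Bb r.+1 ltac:(lia)); rewrite -normrN ler_norm.
have qpos := qexp_gt0 l.+1.
have hxb : - ((q ^ l.+1)%:R * H t l.+1 m.+1 r.+1) <= (q ^ l.+1)%:R * H t l.+1 m.+1 1.
  by rewrite -mulrN ler_pM2l.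
rewrite H_rec //; try lia.
case: t tl {Ba Bb} ha hb hxb => [|t] tl ha hb hxb.
  by have := bias1_gap_ge0 0 l m; rewrite /bias1_gap !H_t0 in hxb *; lra.
have := @bias1_gap_gt0 t l m ltac:(lia) ltac:(lia); rewrite /bias1_gap; lra.
Qed.

End BiasInequality.

Section Weights.
Variable F : finFieldType.

Lemma pid_bias_lt_bias1 t l m r :
  (1 <= t)%N -> (t < l)%N -> (l <= m)%N -> (2 <= r <= l)%N ->
  pid_bias F t l m r < pid_bias F t l m 1.
Proof.
apply: (@bias_lt_bias1 #|F| (fun t l m => (card_rank_le F t l m)%:R)).
- exact: card_finNzRing_gt1.
- exact: pid_bias_rank0.
- exact: pid_bias_t0.
- by move=> *; rewrite card_rank_le_t0.
- by move=> *; rewrite card_rank_le_l0.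
- move=> t' l' m'; rewrite -[l'.+1]add1n -[m'.+1]add1n card_rank_le_rec //.
  by rewrite natrD !natrM natrB ?mulrA // expn_gt0 (ltnW (card_finNzRing_gt1 F)).
- by move=> t' l' m' r' rl rm; rewrite -[l'.+1]add1n -[m'.+1]add1n pid_bias_rec.
- by move=> a n p; rewrite -natrM ler_nat -add1n card_rank_le_extend.
- by move=> a n p an ap; rewrite -natrM ltr_nat -add1n card_rank_le_extend_lt.
Qed.

Lemma what_fiber_card t l m r :
  what F t l m r = fiber_card t (pid_mx r : 'M[F]_(l, m)) 1.
Proof.
rewrite /what (eq_card (B := [set M | (1 <= \rank M <= t)%N && (evalf (pid_mx r) M != 0)])).
  by rewrite card_nonzero_values mulKn // ltn_predRL card_finNzRing_gt1.
by move=> M; rewrite !inE tau_pid_mx.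
Qed.

Lemma what_lt t l m r : (1 <= t)%N -> (t < l)%N -> (l <= m)%N -> (2 <= r <= l)%N ->
  (what F t l m 1 < what F t l m r)%N.
Proof.
move=> t1 tl lm rl; have := pid_bias_lt_bias1 t1 tl lm rl.
have := card_rank_le_bias t (pid_mx 1 : 'M[F]_(l, m)).
have := card_rank_le_bias t (pid_mx r : 'M[F]_(l, m)).
rewrite !what_fiber_card /pid_bias -(ltr_nat int) -(@ltr_pM2l _ #|F|%:R); last first.
  by rewrite ltr0n ltnW ?card_finNzRing_gt1.
lra.
Qed.

Lemma normalized_pivot l m (N : 'M[F]_(l, m)) :
  normalized N -> exists i : 'I_(l * m),
    mxvec N 0 i = 1 /\ forall j, mxvec N 0 j != 0 -> (i <= j)%N.
Proof.
case/existsP => i /andP[/eqP Ni /forallP H]; exists i; split=> // j nz.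
rewrite leqNgt; apply/negP => ji; have := H j; rewrite ji /= => /eqP Nj.
by rewrite Nj eqxx in nz.
Qed.

Lemma mxvecZ_entry l m (a : F) (M : 'M[F]_(l, m)) k : mxvec (a *: M) 0 k = a * mxvec M 0 k.
Proof. by rewrite linearZ mxE. Qed.

(* Both pivots are the first nonzero entry of [a *: M = b *: N], so they coincide and
   comparing the entries there (equal to 1) gives [a = b]. *)
Lemma normalized_scaleI l m (a b : F) (M N : 'M[F]_(l, m)) :
  a != 0 -> b != 0 -> normalized M -> normalized N -> a *: M = b *: N -> a = b /\ M = N.
Proof.
move=> a0 b0 /normalized_pivot[i [Mi iM]] /normalized_pivot[j [Nj jN]] E.
have E' k : a * mxvec M 0 k = b * mxvec N 0 k by rewrite -!mxvecZ_entry E.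
have ij : (i <= j)%N.
  by apply: iM; apply: contra_neq b0 => Mj0; have := E' j; rewrite Mj0 Nj mulr0 mulr1.
have ji : (j <= i)%N.
  by apply: jN; apply: contra_neq a0 => Ni0; have := E' i; rewrite Ni0 Mi mulr0 mulr1.
have eij : i = j by apply: val_inj; apply/eqP; rewrite eqn_leq ij ji.
have eab : a = b by have := E' i; rewrite Mi eij Nj !mulr1.
by split=> //; apply: (scalerI a0); rewrite E eab.
Qed.

Lemma normalize_nz l m (M : 'M[F]_(l, m)) :
  M != 0 -> exists2 a : F, a != 0 & normalized (a *: M).
Proof.
move=> nzM; have : mxvec M != 0.
  by apply: contra_neq nzM => /(congr1 vec_mx); rewrite mxvecK linear0.
case/matrix0Pn => z [k0 nk0]; rewrite ord1 in nk0.
case: (@arg_minnP _ k0 (fun k => mxvec M 0 k != 0) val nk0) => i Mi mini.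
exists (mxvec M 0 i)^-1; rewrite ?invr_eq0 //.
apply/existsP; exists i; rewrite mxvecZ_entry mulVf // eqxx /=.
apply/forallP => j; apply/implyP => ji; rewrite mxvecZ_entry.
case: (eqVneq (mxvec M 0 j) 0) => [->|nz]; first by rewrite mulr0.
by have := mini j nz; rewrite leqNgt ji.
Qed.

Lemma card_nonzero_values_points t l m (f : 'M[F]_(l, m)) :
  #|[set M : 'M[F]_(l, m) | (1 <= \rank M <= t)%N && (evalf f M != 0)]|
  = (#|F|.-1 * #|[set N in Dpts F t l m | evalf f N != 0%R]|)%N.
Proof.
set D := setX [set k : F | k != 0] [set N in Dpts F t l m | evalf f N != 0].
have -> : [set M | (1 <= \rank M <= t)%N && (evalf f M != 0)] = [set p.1 *: p.2 | p in D].
  apply/setP => M; rewrite inE; apply/idP/imsetP.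
  - move=> /andP[/andP[r1 rt] fM].
    have nzM : M != 0 by rewrite -mxrank_eq0 -lt0n.
    have [a a0 nM] := normalize_nz nzM.
    exists (a^-1, a *: M); last by rewrite /= scalerA mulVf // scale1r.
    by rewrite !inE invr_eq0 a0 nM mxrank_scale_nz // rt evalfZ mulf_neq0.
  - move=> [[a N]]; rewrite !inE /= => /and3P[a0 /andP[nN rN] fN] ->.
    rewrite evalfZ mulf_neq0 // andbT mxrank_scale_nz // rN andbT lt0n mxrank_eq0.
    by apply: contra_neq fN => ->; rewrite evalf0.
rewrite card_in_imset ?cardsX; last first.
  move=> [a M] [b N]; rewrite !inE /= => /and3P[a0 /andP[nM _] _] /and3P[b0 /andP[nN _] _].
  by case/(normalized_scaleI a0 b0 nM nN) => -> ->.
by rewrite -(cardC1 (0 : F)); congr (_ * _)%N; apply: eq_card => k; rewrite !inE.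
Qed.

Lemma wt_codeword t l m (f : 'M[F]_(l, m)) : wt (codeword t f) = fiber_card t f 1.
Proof.
have -> : wt (codeword t f) = #|[set N in Dpts F t l m | evalf f N != 0]|.
  rewrite /wt -(card_imset _ enum_val_inj); apply: eq_card => N; rewrite inE.
  apply/imsetP/andP => [[k]|[ND fN]]; first by rewrite inE mxE => fk ->; rewrite enum_valP.
  by exists (enum_rank_in ND N); rewrite ?inE ?mxE enum_rankK_in.
apply/eqP; rewrite -(eqn_pmul2l (_ : 0 < #|F|.-1)%N) ?ltn_predRL ?card_finNzRing_gt1 //.
by rewrite -card_nonzero_values_points card_nonzero_values.
Qed.

Lemma wt_codeword_rank t l m (f : 'M[F]_(l, m)) : wt (codeword t f) = what F t l m (\rank f).
Proof. by rewrite wt_codeword fiber_card_rank what_fiber_card. Qed.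

End Weights.

Section Codewords.
Variables (F : finFieldType) (t l m : nat).

Lemma codewordD (f g : 'M[F]_(l, m)) : codeword t (f + g) = codeword t f + codeword t g.
Proof. by apply/matrixP => i j; rewrite !mxE evalfDl. Qed.

Lemma codewordZ (a : F) (f : 'M[F]_(l, m)) : codeword t (a *: f) = a *: codeword t f.
Proof. by apply/matrixP => i j; rewrite !mxE evalfZl. Qed.

Lemma codeword0 : codeword t (0 : 'M[F]_(l, m)) = 0.
Proof. by apply/matrixP => i j; rewrite !mxE evalf0l. Qed.

Lemma codeword_sum (I : Type) (r : seq I) (P : pred I) (G : I -> 'M[F]_(l, m)) :
  codeword t (\sum_(i <- r | P i) G i) = \sum_(i <- r | P i) codeword t (G i).
Proof. exact: (big_morph _ codewordD codeword0). Qed.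

Lemma mem_Cdet c : (c \in Cdet F t l m) = [exists f, c == codeword t f].
Proof. by apply/imsetP/existsP => [[f _ ->]|[f /eqP ->]]; exists f. Qed.

Lemma codeword_Cdet f : codeword t f \in Cdet F t l m.
Proof. by rewrite mem_Cdet; apply/existsP; exists f. Qed.

Hypotheses (t_gt0 : (0 < t)%N) (lt_tl : (t < l)%N) (le_lm : (l <= m)%N).

Lemma what1_gt0 : (0 < what F t l m 1)%N.
Proof.
case: l m lt_tl le_lm => // l' [|m'] // _ _.
have e : pid_mx 1 = delta_mx 0 0 :> 'M[F]_(l'.+1, m'.+1).
  apply/matrixP => i j; rewrite !mxE.
  by case: i j => [[|i] ?] [[|j] ?]; rewrite /= ?andbF.
rewrite what_fiber_card fiber_cardE (bigD1 (pid_mx 1)) //= rank_pid_mx // t_gt0.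
by rewrite {2}e evalf_delta mxE !eqxx add1n.
Qed.

Lemma wt_codeword_min (f : 'M[F]_(l, m)) : f != 0 ->
  (what F t l m 1 <= wt (codeword t f))%N /\
  (wt (codeword t f) == what F t l m 1) = (\rank f == 1%N).
Proof.
move=> nz; rewrite wt_codeword_rank.
have [->|r1] := eqVneq (\rank f) 1%N; first by rewrite eqxx.
have lt : (what F t l m 1 < what F t l m (\rank f))%N.
  by apply: what_lt => //; have := rank_leq_row f; rewrite -mxrank_eq0 in nz; lia.
by rewrite (ltnW lt) (gtn_eqF lt).
Qed.

Lemma codeword_eq0 (f : 'M[F]_(l, m)) : (codeword t f == 0) = (f == 0).
Proof.
apply/eqP/eqP => [cf0|->]; last exact: codeword0.
apply/eqP; apply: contraT => /wt_codeword_min[le _]; move: le.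
rewrite cf0 /wt; have := what1_gt0; set S := [set _ | _]; suff -> : #|S| = 0%N by lia.
by apply/eqP; rewrite cards_eq0; apply/eqP/setP => k; rewrite !inE mxE eqxx.
Qed.

Lemma codeword_inj : injective (@codeword F t l m).
Proof.
move=> f g E; apply/eqP; rewrite -subr_eq0 -codeword_eq0.
by rewrite codewordD -scaleN1r codewordZ E scaleN1r subrr.
Qed.

Lemma min_wordsE : min_words (Cdet F t l m) (what F t l m 1)
  = @codeword F t l m @: [set f : 'M[F]_(l, m) | \rank f == 1%N].
Proof.
apply/setP => c; rewrite inE; apply/andP/imsetP => [[/imsetP[f _ ->]]|[f]].
  by rewrite codeword_eq0 => /andP[nz w]; exists f; rewrite // inE -(wt_codeword_min nz).2.
rewrite inE => r1 ->; have nz : f != 0 by rewrite -mxrank_eq0 (eqP r1).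
by rewrite codeword_Cdet codeword_eq0 nz (wt_codeword_min nz).2.
Qed.

Lemma Cdet_min_weight : is_min_weight (Cdet F t l m) (what F t l m 1).
Proof.
split=> [|_ /imsetP[f _ ->]]; last by rewrite codeword_eq0 => /wt_codeword_min[].
exists (codeword t (pid_mx 1)); first exact: codeword_Cdet.
by rewrite codeword_eq0 -mxrank_eq0 wt_codeword_rank rank_pid_mx //; lia.
Qed.

Lemma card_min_words : #|min_words (Cdet F t l m) (what F t l m 1)| = mu F 1 l m.
Proof. by rewrite min_wordsE card_imset //; exact: codeword_inj. Qed.

Lemma Cdet_sum_min_words c : c \in Cdet F t l m ->
  exists2 s : seq 'rV[F]_#|Dpts F t l m|,
    (size s <= l)%N /\ all (fun x => x \in min_words (Cdet F t l m) (what F t l m 1)) s &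
    c = \sum_(x <- s) x.
Proof.
case/imsetP => f _ ->; set p := fun i : 'I_l => (delta_mx i 0 : 'cV[F]_l) *m row i f.
have fE : f = \sum_i p i.
  under eq_bigr => i _ do rewrite /p rowE mulmxA mul_delta_mx.
  by rewrite -mulmx_suml -mx1_sum_delta mul1mx.
exists [seq codeword t (p i) | i <- enum [pred i | p i != 0]].
  split; first by rewrite size_map -cardE (leq_trans (max_card _)) ?card_ord.
  apply/allP => x /mapP[i]; rewrite mem_enum inE => nz ->; rewrite min_wordsE imset_f //.
  by rewrite inE eqn_leq mulmx_max_rank lt0n mxrank_eq0 nz.
rewrite big_map big_enum /= {1}fE codeword_sum (bigID (fun i => p i != 0)) /=.
by rewrite [X in _ + X]big1 ?addr0 // => i /negPn/eqP ->; exact: codeword0.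
Qed.

Lemma span_min_words :
  [set c | c \in <<enum (min_words (Cdet F t l m) (what F t l m 1))>>%VS] = Cdet F t l m.
Proof.
apply/setP => c; rewrite inE; apply/idP/idP => [cX|/Cdet_sum_min_words[s [_ sW] ->]].
  set X := enum _ in cX; have := coord_span (X := in_tuple X) cX; set a := coord _ => ->.
  have /all_sig[g gE] (i : 'I_(size X)) : {f | X`_i = codeword t f}.
    have : X`_i \in @codeword F t l m @: [set f | \rank f == 1%N].
      by rewrite -min_wordsE -mem_enum mem_nth.
    by case/imsetP/sig2_eqW => f _ ->; exists f.
  have -> : \sum_i a i c *: (in_tuple X)`_i = codeword t (\sum_i a i c *: g i).
    by rewrite codeword_sum; apply: eq_bigr => i _; rewrite codewordZ -gE.
  exact: codeword_Cdet.
rewrite big_seq; apply: memv_suml => x xs; apply: memv_span.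
by rewrite mem_enum (allP sW).
Qed.

End Codewords.

Theorem mainTheorem7 (F : finFieldType) (t l m : nat) :
  (1 <= t)%N -> (t < l)%N -> (l <= m)%N ->
  (forall r : nat, (2 <= r <= l)%N -> (what F t l m 1 < what F t l m r)%N) /\
  exists d : nat,
    is_min_weight (Cdet F t l m) d /\
    #|min_words (Cdet F t l m) d| = mu F 1 l m /\
    [set c | c \in <<enum (min_words (Cdet F t l m) d)>>%VS] = Cdet F t l m /\
    (forall c, c \in Cdet F t l m ->
       exists2 s : seq 'rV[F]_#|Dpts F t l m|,
         (size s <= l)%N /\ all (fun x => x \in min_words (Cdet F t l m) d) s &
         c = \sum_(x <- s) x).
Proof.
move=> t1 tl lm; split=> [r|]; first exact: what_lt.
exists (what F t l m 1); split; first exact: Cdet_min_weight.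
split; first exact: card_min_words.
by split; [exact: span_min_words | exact: Cdet_sum_min_words].
Qed.
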